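(* Let $v_1,\dots,v_m\in\mathbb{Q}^n$ and $P=P_{v_1,\dots,v_m}$. Let $w\in\sum_{i=1}^m\mathbb{Q}_Pv_i$, and suppose there exist a natural number $k$ none of whose prime factors lies in $P$ and a subset $I\subseteq\{1,\dots,m\}$ such that $kw\in\sum_{i\in I}\mathbb{Q}_Pv_i$. Then $w\in\sum_{i\in I}\mathbb{Q}_Pv_i$.
   Context: An elementary integral relation among $v_1,\dots,v_m$ is a relation $\sum_{i=1}^m a_iv_i=0$ with $a_i\in\mathbb{Z}$ not all zero, whose support $\{i:a_i\neq0\}$ is minimal (inclusion-wise) among supports of nontrivial linear relations, and whose coefficients have greatest common divisor $1$. $P_{v_1,\dots,v_m}$ is the (finite) set of primes $p$ for which there exists an elementary integral relation $\sum a_iv_i=0$ with $p\mid\prod_{a_i\neq0}a_i$. For a set of primes $P$, $\mathbb{Q}_P=\{a/b: a,b\in\mathbb{Z},\ b\neq0,\ \text{all prime factors of } b \text{ lie in } P\}$ (so $\mathbb{Q}_\emptyset=\mathbb{Z}$). *)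

From HB Require Import structures.
From mathcomp Require Import all_boot all_order all_algebra.
Set Implicit Arguments. Unset Strict Implicit. Unset Printing Implicit Defensive.
Import Order.TTheory GRing.Theory Num.Theory.
Local Open Scope ring_scope.

Definition supp (m : nat) (c : 'I_m -> rat) : {set 'I_m} := [set i | c i != 0].

Definition nontriv_rel (m n : nat) (v : 'I_m -> 'rV[rat]_n) (c : 'I_m -> rat) : Prop :=
  (\sum_(i < m) c i *: v i = 0) /\ (exists i, c i != 0).

Definition intQ (m : nat) (a : 'I_m -> int) : 'I_m -> rat := fun i => (a i)%:~R.

Definition elementary_rel (m n : nat) (v : 'I_m -> 'rV[rat]_n) (a : 'I_m -> int) : Prop :=
  nontriv_rel v (intQ a) /\
  (forall c : 'I_m -> rat, nontriv_rel v c ->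
      supp c \subset supp (intQ a) -> supp c = supp (intQ a)) /\
  (\big[gcdn/0%N]_(i < m) `|a i|%N = 1%N).

Definition Pv (m n : nat) (v : 'I_m -> 'rV[rat]_n) (p : nat) : Prop :=
  prime p /\ exists a : 'I_m -> int,
    elementary_rel v a /\ (p %| \prod_(i < m | a i != 0) `|a i|%N)%N.

Definition QP (P : nat -> Prop) (q : rat) : Prop :=
  exists (a b : int), b != 0 /\
    (forall p : nat, prime p -> (p %| `|b|%N)%N -> P p) /\ q = a%:~R / b%:~R.

Definition in_QP_span (P : nat -> Prop) (m n : nat) (v : 'I_m -> 'rV[rat]_n)
    (I : {set 'I_m}) (w : 'rV[rat]_n) : Prop :=
  exists c : 'I_m -> rat, (forall i, i \in I -> QP P (c i)) /\
    w = \sum_(i in I) c i *: v i.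

From HB Require Import structures.
From mathcomp Require Import all_boot all_order all_algebra.
From mathcomp Require Import ring boolp.
Set Implicit Arguments. Unset Strict Implicit. Unset Printing Implicit Defensive.
Import Order.TTheory GRing.Theory Num.Theory.
Local Open Scope ring_scope.

(* Choose a basis S1 of the span of the v_i, i in I, among those vectors, and
   extend it to a basis S of the span of all the v_i.  For j outside S, the
   relation v_j - sum_(s in S) r_s v_s has minimal support (every relation
   supported inside it is a multiple of it), so its primitive integer multiple
   a is an elementary relation; hence every prime factor of a_j lies in P and
   each r_s = - a_s / a_j lies in Q_P.  So w has Q_P-coordinates x on S.  As
   k w lies in the span of S1, uniqueness of coordinates forces k x, hence x,
   to vanish off S1, a subset of I. *)

Section FreeSpan.

Variables (K : fieldType) (V : lmodType K) (m : nat) (v : 'I_m -> V).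

Definition free_on (S : {set 'I_m}) : Prop :=
  forall c : 'I_m -> K, (forall i, i \notin S -> c i = 0) ->
    \sum_i c i *: v i = 0 -> forall i, c i = 0.

Definition span_on (Q : K -> Prop) (S : {set 'I_m}) (u : V) : Prop :=
  exists x : 'I_m -> K,
    [/\ forall i, i \notin S -> x i = 0, forall i, Q (x i) & u = \sum_i x i *: v i].

Lemma free_on0 : free_on set0.
Proof. by move=> c c0 _ i; apply: c0; rewrite inE. Qed.

Lemma sum_delta_scale j : \sum_i (i == j)%:R *: v i = v j.
Proof.
by rewrite (bigD1 j) //= eqxx scale1r big1 ?addr0 // => i /negbTE->; rewrite scale0r.
Qed.

Lemma free_on_coef_eq S (x y : 'I_m -> K) : free_on S ->
    (forall i, i \notin S -> x i = 0) -> (forall i, i \notin S -> y i = 0) ->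
  \sum_i x i *: v i = \sum_i y i *: v i -> x =1 y.
Proof.
move=> freeS xS yS exy i; apply/eqP; rewrite -subr_eq0; apply/eqP.
apply: (freeS (fun i => x i - y i)) => [j jS|]; first by rewrite xS // yS // subr0.
by under eq_bigr do rewrite scalerBl; rewrite sumrB exy subrr.
Qed.

Section SpanClosure.

Variables (Q : K -> Prop) (S : {set 'I_m}).
Hypotheses (Q0 : Q 0) (Q1 : Q 1).
Hypotheses (QD : forall a b, Q a -> Q b -> Q (a + b)).
Hypotheses (QM : forall a b, Q a -> Q b -> Q (a * b)).

Lemma span_on_vec j : j \in S -> span_on Q S (v j).
Proof.
move=> jS; exists (fun i => (i == j)%:R); split; last by rewrite sum_delta_scale.
  by move=> i iS; case: eqP => // ij; rewrite ij jS in iS.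
by move=> i; case: (i == j).
Qed.

Lemma span_on_lincomb (A : {set 'I_m}) (c : 'I_m -> K) :
    (forall i, i \in A -> Q (c i)) -> (forall i, i \in A -> span_on Q S (v i)) ->
  span_on Q S (\sum_(i in A) c i *: v i).
Proof.
move=> cQ vS; apply: big_ind => [|u1 u2|i iA].
- exists (fun=> 0); split=> //; by rewrite big1 // => i _; rewrite scale0r.
- move=> [x1 [x1S x1Q ->]] [x2 [x2S x2Q ->]].
  exists (fun i => x1 i + x2 i); split=> [i iS|i|]; first by rewrite x1S // x2S // addr0.
    exact: QD (x1Q i) (x2Q i).
  by rewrite -big_split; apply: eq_bigr => i _; rewrite scalerDl.
- have [x [xS xQ ->]] := vS i iA.
  exists (fun j => c i * x j); split=> [j jS|j|]; first by rewrite xS // mulr0.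
    exact: QM (cQ i iA) (xQ j).
  by rewrite scaler_sumr; apply: eq_bigr => j _; rewrite scalerA.
Qed.

End SpanClosure.

Lemma span_on_maximal_free S j :
  free_on S -> ~ free_on (j |: S) -> span_on (fun=> True) S (v j).
Proof.
move=> freeS; apply: contra_notP => notspan c cjS csum.
have cj : c j = 0.
  apply: contrapT => cj; apply: notspan.
  exists (fun i => (i == j)%:R - c i / c j); split=> // [i iS|].
    case: (eqVneq i j) => [->|ij]; first by rewrite divff ?subrr //; apply/eqP.
    by rewrite cjS ?mul0r ?subrr // in_setU1 negb_or ij.
  under eq_bigr do rewrite scalerBl mulrC -scalerA.
  by rewrite sumrB sum_delta_scale -scaler_sumr csum scaler0 subr0.
apply: freeS csum => i iS; case: (eqVneq i j) => [->//|ij].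
by apply: cjS; rewrite in_setU1 negb_or ij.
Qed.

Lemma exists_basis (T S0 : {set 'I_m}) : S0 \subset T -> free_on S0 ->
  exists2 S : {set 'I_m}, S0 \subset S &
    [/\ S \subset T, free_on S & forall j, j \in T -> span_on (fun=> True) S (v j)].
Proof.
move=> S0T freeS0.
pose P := [pred S : {set 'I_m} | (S \subset T) && `[< free_on S >]].
have /maxset_exists[S /maxsetP[/andP[ST /asboolP freeS] maxS] S0S] : P S0.
  by rewrite inE S0T; apply/asboolP.
exists S => //; split=> // j jT.
have [jS|jS] := boolP (j \in S); first exact: span_on_vec.
apply: span_on_maximal_free => // freejS.
have jSS : j |: S = S.
  by apply: maxS; [rewrite inE subUset sub1set jT ST; apply/asboolP | apply: subsetUr].
by move: jS; rewrite -jSS setU11.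
Qed.

End FreeSpan.

Lemma prime_divisors_inM (P : nat -> Prop) (b1 b2 : int) :
    (forall p, prime p -> (p %| `|b1|%N)%N -> P p) ->
    (forall p, prime p -> (p %| `|b2|%N)%N -> P p) ->
  forall p, prime p -> (p %| `|(b1 * b2)%R|%N)%N -> P p.
Proof. by move=> h1 h2 p pp; rewrite abszM Euclid_dvdM // => /orP[/h1|/h2]; apply. Qed.

Lemma QP0 (P : nat -> Prop) : QP P 0.
Proof.
exists 0, 1; split=> //; split; last by rewrite mul0r.
by move=> p pp; rewrite dvdn1 => /eqP p1; rewrite p1 in pp.
Qed.

Lemma QP1 (P : nat -> Prop) : QP P 1.
Proof.
exists 1, 1; split=> //; split; last by rewrite divr1.
by move=> p pp; rewrite dvdn1 => /eqP p1; rewrite p1 in pp.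
Qed.

Lemma QPD (P : nat -> Prop) x y : QP P x -> QP P y -> QP P (x + y).
Proof.
move=> [a1 [b1 [b10 [h1 ->]]]] [a2 [b2 [b20 [h2 ->]]]].
exists (a1 * b2 + a2 * b1), (b1 * b2); split; first by rewrite mulf_neq0.
split; first exact: prime_divisors_inM.
by rewrite intrD !intrM; field; rewrite !intr_eq0 b10 b20.
Qed.

Lemma QPM (P : nat -> Prop) x y : QP P x -> QP P y -> QP P (x * y).
Proof.
move=> [a1 [b1 [b10 [h1 ->]]]] [a2 [b2 [b20 [h2 ->]]]].
exists (a1 * a2), (b1 * b2); split; first by rewrite mulf_neq0.
split; first exact: prime_divisors_inM.
by rewrite !intrM; field; rewrite !intr_eq0 b10 b20.
Qed.

Lemma int_multiple m (c : 'I_m -> rat) :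
  exists2 l : rat, l != 0 & exists a : 'I_m -> int, forall i, (a i)%:~R = l * c i.
Proof.
pose D := \prod_(i < m) denq (c i).
exists D%:~R; first by rewrite intr_eq0 gt_eqF // prodr_gt0 // => i _; apply: denq_gt0.
exists (fun i => numq (c i) * \prod_(k < m | k != i) denq (c k)) => i.
have di : (denq (c i))%:~R != 0 :> rat by rewrite intr_eq0 denq_neq0.
by rewrite /D [in RHS](bigD1 i) //= !intrM numqE; field.
Qed.

Lemma int_primitive_part m (a : 'I_m -> int) j : a j != 0 ->
  exists2 g : nat, (0 < g)%N & exists b : 'I_m -> int,
    (forall i, a i = b i * g%:Z) /\ \big[gcdn/0%N]_(i < m) `|b i|%N = 1%N.
Proof.
move=> aj; pose g := \big[gcdn/0%N]_(i < m) `|a i|%N.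
have g_dvd i : (g %| `|a i|)%N by rewrite /g (bigD1 i) //= dvdn_gcdl.
have g_gt0 : (0 < g)%N.
  by rewrite lt0n; apply: contraNneq aj => g0; rewrite -absz_eq0 -dvd0n -g0.
exists g => //; exists (fun i => (a i %/ g%:Z)%Z).
have a_def i : a i = (a i %/ g%:Z)%Z * g%:Z by rewrite divzK // dvdzE absz_nat.
split=> //; apply/eqP; rewrite -(eqn_pmul2r g_gt0) mul1n; apply/eqP.
rewrite (big_morph (fun x => x * g)%N (fun x y => muln_gcdl x y g) (mul0n g)).
transitivity g => //; apply: eq_bigr => i _.
by rewrite [in RHS]a_def abszM absz_nat.
Qed.

Section Circuit.

Variables (m n : nat) (v : 'I_m -> 'rV[rat]_n) (S : {set 'I_m}) (j : 'I_m).
Variables (r : 'I_m -> rat).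
Hypotheses (freeS : free_on v S) (jS : j \notin S).
Hypotheses (rS : forall i, i \notin S -> r i = 0) (vj_def : v j = \sum_i r i *: v i).

Let c i := (i == j)%:R - r i.

Let cj : c j = 1.
Proof. by rewrite /c eqxx rS // subr0. Qed.

Let c_out i : i \notin S -> i != j -> c i = 0.
Proof. by move=> iS ij; rewrite /c (negbTE ij) rS // subrr. Qed.

Lemma circuit_sum : \sum_i c i *: v i = 0.
Proof.
by rewrite /c; under eq_bigr do rewrite scalerBl; rewrite sumrB sum_delta_scale -vj_def subrr.
Qed.

Lemma circuit_rel_proportional (d : 'I_m -> rat) :
    \sum_i d i *: v i = 0 -> (forall i, c i = 0 -> d i = 0) ->
  forall i, d i = d j * c i.
Proof.
move=> dsum dc i; apply/eqP; rewrite -subr_eq0; apply/eqP; move: i.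
apply: freeS => [i iS|].
  have [->|ij] := eqVneq i j; first by rewrite cj mulr1 subrr.
  by rewrite c_out // mulr0 subr0 dc // c_out.
under eq_bigr do rewrite scalerBl -scalerA.
by rewrite sumrB -scaler_sumr circuit_sum dsum scaler0 subrr.
Qed.

Lemma circuit_elementary (a : 'I_m -> int) (l : rat) : l != 0 ->
    (forall i, (a i)%:~R = l * c i) -> \big[gcdn/0%N]_(i < m) `|a i|%N = 1%N ->
  elementary_rel v a.
Proof.
move=> l0 a_def a_gcd.
have supp_a : supp (intQ a) = [set i | c i != 0].
  by apply/setP => i; rewrite !inE /intQ a_def mulf_eq0 negb_or l0.
split; [split|split=> //].
- rewrite /intQ; under eq_bigr do rewrite a_def -scalerA.
  by rewrite -scaler_sumr circuit_sum scaler0.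
- by exists j; rewrite /intQ a_def cj mulr1.
move=> d [dsum [i0 di0]]; rewrite supp_a => /subsetP sub_d.
have dc i : c i = 0 -> d i = 0.
  by move=> ci; apply/eqP; move: (contra (sub_d i)); rewrite !inE ci eqxx => /(_ isT)/negPn.
have d_def := circuit_rel_proportional dsum dc.
have dj : d j != 0 by apply: contraNneq di0 => dj0; rewrite d_def dj0 mul0r.
by apply/setP => i; rewrite !inE d_def mulf_eq0 negb_or dj.
Qed.

Lemma circuit_coef_QP s : QP (Pv v) (r s).
Proof.
have [->|sj] := eqVneq s j; first by rewrite rS //; apply: QP0.
have [l l0 [a' a'_def]] := int_multiple c.
have a'j : a' j != 0 by rewrite -(intr_eq0 rat) a'_def cj mulr1.
have [g g_gt0 [a [a'_eq a_gcd]]] := int_primitive_part a'j.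
have g0 : g%:R != 0 :> rat by rewrite pnatr_eq0 -lt0n.
have a_def i : (a i)%:~R = l / g%:R * c i.
  by apply: (mulIf g0); rewrite mulrAC divfK // -a'_def a'_eq intrM.
have lg0 : l / g%:R != 0 by rewrite mulf_neq0 ?invr_eq0.
have aj : (a j)%:~R = l / g%:R by rewrite a_def cj mulr1.
have aj0 : a j != 0 by rewrite -(intr_eq0 rat) aj.
exists (- a s), (a j); split=> //; split.
  move=> p pp p_dvd; split=> //; exists a; split; first exact: circuit_elementary a_def a_gcd.
  by rewrite (bigD1 j) //=; apply: dvdn_trans p_dvd (dvdn_mulr _ _).
by rewrite intrN a_def aj /c (negbTE sj) sub0r mulrN opprK mulrC mulKf.
Qed.

End Circuit.

Lemma span_on_QP_basis m n (v : 'I_m -> 'rV[rat]_n) (S : {set 'I_m}) :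
    free_on v S -> (forall j, span_on v (fun=> True) S (v j)) ->
  forall j, span_on v (QP (Pv v)) S (v j).
Proof.
move=> freeS spanS j; have [jS|jS] := boolP (j \in S).
  by apply: span_on_vec => //; [apply: QP0 | apply: QP1].
have [r [rS _ vj_def]] := spanS j.
by exists r; split=> // s; apply: (circuit_coef_QP freeS jS rS vj_def).
Qed.

Theorem mainTheorem5 (m n : nat) (v : 'I_m -> 'rV[rat]_n) (w : 'rV[rat]_n)
    (k : nat) (I : {set 'I_m}) :
  in_QP_span (Pv v) v setT w ->
  (0 < k)%N ->
  (forall p : nat, prime p -> (p %| k)%N -> ~ Pv v p) ->
  in_QP_span (Pv v) v I (k%:R *: w) ->
  in_QP_span (Pv v) v I w.
Proof.
move=> [c [cQP w_def]] k_gt0 _ [d [_ kw_def]].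
have [S1 _ [S1I freeS1 spanI]] := exists_basis (sub0set I) (free_on0 (v := v)).
have [S S1S [_ freeS spanT]] := exists_basis (subsetT S1) freeS1.
have [x [xS xQP x_def]] : span_on v (QP (Pv v)) S w.
  rewrite w_def; apply: (span_on_lincomb (QP0 _) (@QPD _) (@QPM _) cQP) => i _.
  by apply: span_on_QP_basis => // j; apply: spanT; rewrite inE.
have [y [yS _ y_def]] : span_on v (fun=> True) S1 (k%:R *: w).
  by rewrite kw_def; apply: span_on_lincomb.
have kx_y : (fun i => k%:R * x i) =1 y.
  apply: (free_on_coef_eq freeS) => [i iS|i iS|]; first by rewrite xS ?mulr0.
    by rewrite yS //; apply: contra iS; apply: (subsetP S1S).
  by rewrite -y_def x_def scaler_sumr; apply: eq_bigr => i _; rewrite scalerA.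
exists x; split=> [i _|]; first exact: xQP.
rewrite x_def [RHS]big_mkcond /=; apply: eq_bigr => i _; case: ifP => // iI.
have iS1 : i \notin S1 by apply: contraFN iI; apply: (subsetP S1I).
have /eqP : k%:R * x i = 0 by rewrite kx_y yS.
by rewrite mulf_eq0 pnatr_eq0 (gtn_eqF k_gt0) => /eqP->; rewrite scale0r.
Qed.
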